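(* Let $n\ge4$. The unique $S_n$-submodule of $\mathcal{L}_n$ isomorphic to $\{n-2,2\}$ is $$W_n:=\{Q=(q_{ij})\in\mathcal{L}_n: Q=Q^T,\ q_{ii}=0\ \forall i\},$$ and moreover $W_n=\operatorname{span}_{\mathbb{R}}\big(L_{(ij)(kl)}-L_{(ik)(jl)}: i,j,k,l\in[n]\text{ pairwise distinct}\big)$.
   Context: Let $\mathbf{1}\in\mathbb{R}^n$ be the all-ones column vector and $\mathcal{L}_n=\{Q\in \mathrm{Mat}_n(\mathbb{R}): Q\mathbf{1}=0\}$. For $\sigma\in S_n$, $K_\sigma$ is the permutation matrix with $e_iK_\sigma=e_{\sigma(i)}$ and $L_\sigma:=K_\sigma-I_n$. $S_n$ acts on $\mathcal{L}_n$ by $\sigma\cdot X=K_\sigma^TXK_\sigma$. $\{n-2,2\}$ denotes the irreducible real $S_n$-module labelled by the partition $(n-2,2)$; it occurs with multiplicity one in $\mathcal{L}_n$ for $n\ge4$. *)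

From HB Require Import structures.
From mathcomp Require Import all_boot all_order all_algebra all_fingroup.
From mathcomp Require Import reals.
Set Implicit Arguments. Unset Strict Implicit. Unset Printing Implicit Defensive.
Import Order.TTheory GRing.Theory Num.Theory.
Local Open Scope ring_scope.

Section Defs.
Variables (R : realType) (n : nat).

(* K_sigma : e_i K_sigma = e_{sigma i}, i.e. K_sigma i j = (sigma i == j). *)
Definition Kmx (s : 'S_n) : 'M[R]_n := perm_mx s.
Definition Lmx (s : 'S_n) : 'M[R]_n := Kmx s - 1%:M.

Definition actL (s : 'S_n) (X : 'M[R]_n) : 'M[R]_n := (Kmx s)^T *m X *m Kmx s.

Definition inLn (Q : 'M[R]_n) : bool := Q *m (const_mx 1 : 'cV[R]_n) == 0.

Definition is_submodule (U : {vspace 'M[R]_n}) : Prop :=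
  (forall Q, Q \in U -> inLn Q) /\ (forall s Q, Q \in U -> actL s Q \in U).

(* The Specht module {n-2,2}: the span of the polytabloids inside the
   permutation module on tabloids of shape (n-2,2); a tabloid is identified
   with its second row, a 2-subset of [n]. *)
Definition FT := {ffun {set 'I_n} -> R^o}.

Definition tab (A : {set 'I_n}) : FT := [ffun B => (B == A)%:R].

(* polytabloid of the tableau with columns {c,a}, {d,b} and second row (a,b) *)
Definition polytab (a b c d : 'I_n) : FT :=
  tab [set a; b] - tab [set c; b] - tab [set a; d] + tab [set c; d].

Definition distinct4 (i j k l : 'I_n) : bool :=
  [&& i != j, i != k, i != l, j != k, j != l & k != l].

Definition polytabs : seq FT :=
  [seq polytab t.1.1.1 t.1.1.2 t.1.2 t.2 |
     t <- enum [pred t : 'I_n * 'I_n * 'I_n * 'I_n |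
                  distinct4 t.1.1.1 t.1.1.2 t.1.2 t.2]].

Definition specht : {vspace FT} := <<polytabs>>%VS.

(* permutation action on the tabloid module: (sigma . f)(A) = f(sigma^-1 A),
   so that sigma . e_A = e_{sigma A}, matching the action on matrices,
   (sigma . X)_{ij} = X_{sigma^-1 i, sigma^-1 j}. *)
Definition actT (s : 'S_n) (f : FT) : FT := [ffun A : {set 'I_n} => f ((s^-1)%g @: A)].

Definition iso_specht (U : {vspace 'M[R]_n}) : Prop :=
  exists phi : 'M[R]_n -> FT,
    [/\ {in U &, forall (X Y : 'M[R]_n) (a : R), phi (a *: X + Y) = a *: phi X + phi Y},
        {in U &, injective phi},
        (forall f, f \in specht <-> exists2 X, X \in U & phi X = f)
      & (forall s X, X \in U -> phi (actL s X) = actT s (phi X))].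

Definition inWn (Q : 'M[R]_n) : bool :=
  [&& inLn Q, Q^T == Q & [forall i, Q i i == 0]].

Definition Wgens : seq 'M[R]_n :=
  [seq Lmx (tperm t.1.1.1 t.1.1.2 * tperm t.1.2 t.2)%g
       - Lmx (tperm t.1.1.1 t.1.2 * tperm t.1.1.2 t.2)%g |
     t <- enum [pred t : 'I_n * 'I_n * 'I_n * 'I_n |
                  distinct4 t.1.1.1 t.1.1.2 t.1.2 t.2]].

End Defs.

From HB Require Import structures.
From mathcomp Require Import all_boot all_order all_algebra all_fingroup.
From mathcomp Require Import reals.
From mathcomp.algebra_tactics Require Import ring lra.
Set Implicit Arguments. Unset Strict Implicit. Unset Printing Implicit Defensive.
Import Order.TTheory GRing.Theory Num.Theory.
Local Open Scope ring_scope.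

(* Let S_xy = e_xy + e_yx and E_abcd = S_ab - S_cb - S_ad + S_cd.  For pairwise
   distinct i,j,k,l the generator L_(ij)(kl) - L_(ik)(jl) equals E_ijlk, so the
   span V of the generators is the span of the E_abcd, a,b,c,d distinct.
   1. V = W_n.  Each E_abcd is symmetric with zero diagonal and zero row sums.
      Conversely, fixing three points o, e, f, a matrix Q of W_n is matched
      away from the rows/columns o, e by a combination of the E_ij o e, then
      on row o by a combination of the E_oy e f; what remains is a matrix of
      W_n vanishing at those places, hence zero by the row-sum conditions.
      W_n is visibly S_n-stable, so V is a submodule of L_n.
   2. The map phi(Q) = sum_ij Q_ij/2 . e_{{i,j}} into the tabloid module is
      linear and S_n-equivariant, sends E_abcd to the polytabloid e_abcd, and
      is injective on W_n since it reads off the off-diagonal entries; hence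
      V is isomorphic to the Specht module.
   3. Uniqueness.  If psi : U -> Specht is an equivariant linear bijection,
      the preimage X of e_abcd has the sign symmetries of e_abcd under (a c),
      (b d) and (a b)(c d); these force X = X_ab E_abcd with X_ab <> 0.  So U
      contains every E_abcd, and the preimages of the polytabloids lie in
      U meet V; injectivity of psi then gives U = V. *)

Lemma span_ind (K : fieldType) (vT : vectType K) (s : seq vT) (P : vT -> Prop) :
  P 0 -> (forall a x y, P x -> P y -> P (a *: x + y)) -> (forall x, x \in s -> P x) ->
  forall v, v \in <<s>>%VS -> P v.
Proof.
move=> P0 PD Ps v /(@coord_span _ _ _ (in_tuple s)) ->.
apply: (big_ind P) => // [x y Px Py|i _]; first by rewrite -[x]scale1r; apply: PD.
rewrite -[_ *: _]addr0; apply: PD => //; apply/Ps/mem_nth; exact: ltn_ord.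
Qed.

Lemma neq_sym (T : eqType) (a b : T) : a != b -> b != a.
Proof. by rewrite eq_sym. Qed.

Ltac simpeq := rewrite ?eqxx /=; repeat (match goal with H : is_true (?a != ?b) |- _ =>
   progress rewrite ?(negbTE H) ?(negbTE (neq_sym H)) ?eqxx /= end).

Section Matrices.
Variables (R : realType) (n : nat).
Local Notation M := 'M[R]_n.

Lemma actLE (s : 'S_n) (X : M) i j : actL s X i j = X (s^-1 i)%g (s^-1 j)%g.
Proof.
rewrite /actL /Kmx tr_perm_mx -row_permE.
have -> : forall Y : M, Y *m perm_mx s = col_perm s^-1 Y.
  by move=> Y; rewrite col_permE invgK.
by rewrite !mxE.
Qed.

Lemma inWnP (Q : M) : reflect [/\ forall i, \sum_j Q i j = 0,
   forall i j, Q j i = Q i j & forall i, Q i i = 0] (inWn Q).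
Proof.
have rowsumE i : (Q *m (const_mx 1 : 'cV[R]_n)) i 0 = \sum_j Q i j.
  by rewrite mxE; apply: eq_bigr => j _; rewrite mxE mulr1.
apply: (iffP and3P) => [[/eqP Q1 /eqP Q2 /forallP Q3]|[Q1 Q2 Q3]].
  split=> [i|i j|i]; [by rewrite -rowsumE Q1 mxE | by rewrite -{1}Q2 mxE | exact/eqP].
split; last by apply/forallP => i; rewrite Q3.
  by apply/eqP/matrixP => i j; rewrite ord1 rowsumE Q1 mxE.
by apply/eqP/matrixP => i j; rewrite mxE.
Qed.

Lemma inWn0 : inWn (0 : M).
Proof. by apply/inWnP; split=> *; rewrite ?mxE // big1 // => j _; rewrite mxE. Qed.

Lemma inWnDZ (a : R) (X Y : M) : inWn X -> inWn Y -> inWn (a *: X + Y).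
Proof.
move=> /inWnP [X1 X2 X3] /inWnP [Y1 Y2 Y3]; apply/inWnP; split.
- move=> i; under eq_bigr do rewrite !mxE.
  by rewrite big_split /= -mulr_sumr X1 Y1 mulr0 addr0.
- by move=> i j; rewrite !mxE X2 Y2.
- by move=> i; rewrite !mxE X3 Y3 mulr0 addr0.
Qed.

Lemma inWnB (X Y : M) : inWn X -> inWn Y -> inWn (X - Y).
Proof. by move=> HX HY; rewrite addrC -scaleN1r; apply: inWnDZ. Qed.

Lemma inWn_actL (s : 'S_n) (Q : M) : inWn Q -> inWn (actL s Q).
Proof.
case/inWnP => Q1 Q2 Q3; apply/inWnP; split => [i|i j|i]; rewrite ?actLE //.
under eq_bigr do rewrite actLE.
by rewrite (reindex_inj (@perm_inj _ s)) /=; under eq_bigr do rewrite permK.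
Qed.

(* The symmetric elementary matrices S_xy = e_xy + e_yx and the matrices
   E_abcd = S_ab - S_cb - S_ad + S_cd, which are the images under the
   isomorphism with the tabloid module of the polytabloids. *)
Definition S (x y : 'I_n) : M := delta_mx x y + delta_mx y x.
Definition E (a b c d : 'I_n) : M := S a b - S c b - S a d + S c d.

Lemma SE x y i j : S x y i j = ((i == x) && (j == y))%:R + ((i == y) && (j == x))%:R.
Proof. by rewrite !mxE. Qed.

Lemma EE a b c d i j : E a b c d i j = S a b i j - S c b i j - S a d i j + S c d i j.
Proof. by rewrite !mxE. Qed.

Lemma sum_pick (F : 'I_n -> R) y : \sum_j ((j == y)%:R * F j) = F y.
Proof.
rewrite (bigD1 y) //= eqxx mul1r big1 ?addr0 // => j /negbTE ->.
by rewrite mul0r.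
Qed.

Lemma rowsumS x y i : \sum_j S x y i j = (i == x)%:R + (i == y)%:R.
Proof.
under eq_bigr do rewrite SE.
have sum_row u v : \sum_(j < n) ((i == u) && (j == v))%:R = (i == u)%:R :> R.
  case: (i == u) => /=; last by rewrite big1.
  by rewrite -[RHS](sum_pick (fun=> 1) v); apply: eq_bigr => j _; rewrite mulr1.
by rewrite big_split /= !sum_row.
Qed.

Lemma E_inWn a b c d : a != b -> a != d -> c != b -> c != d -> inWn (E a b c d).
Proof.
move=> hab had hcb hcd; apply/inWnP; split.
- move=> i; under eq_bigr do rewrite EE.
  rewrite !big_split /= !sumrN !rowsumS.
  move: ((i == a)%:R : R) ((i == b)%:R : R) ((i == c)%:R : R) ((i == d)%:R : R) => x y z w.
  ring.
- by move=> i j; rewrite !EE !SE !(andbC (j == _)); ring.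
move=> i; rewrite EE !SE.
have [->|hia] := eqVneq i a; first by simpeq; rewrite ?andbF /=; ring.
have [->|hic] := eqVneq i c; first by simpeq; rewrite ?andbF /=; ring.
by simpeq; rewrite ?andbF /=; ring.
Qed.

Lemma tpermE' (x y z : 'I_n) : tperm x y z = if z == x then y else if z == y then x else z.
Proof. by rewrite permE /=; case: eqP => // _; case: eqP. Qed.

Lemma distinct4_swap34 (a b c d : 'I_n) : distinct4 a b c d -> distinct4 a b d c.
Proof. by rewrite /distinct4 => /andP [? /and5P [? ? ? ? ?]]; simpeq. Qed.

Lemma gensE i j k l : distinct4 i j k l ->
  Lmx R (tperm i j * tperm k l)%g - Lmx R (tperm i k * tperm j l)%g = E i j l k.
Proof.
rewrite /distinct4 => /andP [hij /and5P [hik hil hjk hjl hkl]].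
rewrite /Lmx /Kmx opprB addrA subrK.
apply/matrixP => x y; rewrite EE !SE !mxE !permM.
have [->|?] := eqVneq x i; [|have [->|?] := eqVneq x j;
  [|have [->|?] := eqVneq x k; [|have [->|?] := eqVneq x l]]];
by rewrite !tpermE'; simpeq; rewrite ?(eq_sym y); ring.
Qed.

Local Notation V := (<<Wgens R n>>%VS).

Lemma memWgens X : X \in Wgens R n -> exists a b c d, distinct4 a b c d /\ X = E a b c d.
Proof.
case/mapP => [[[[i j] k] l]]; rewrite mem_enum /= => H ->.
by exists i, j, l, k; split; [apply: distinct4_swap34 | rewrite gensE].
Qed.

Lemma E_in_V (a b c d : 'I_n) : distinct4 a b c d -> E a b c d \in V.
Proof.
move=> H; apply/memv_span/mapP; exists (a, b, d, c).
  by rewrite mem_enum /=; apply: distinct4_swap34.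
by rewrite /= gensE // distinct4_swap34.
Qed.

Lemma V_inWn X : X \in V -> inWn X.
Proof.
move: X; apply: span_ind; [exact: inWn0 | by move=> *; apply: inWnDZ |].
move=> Y /memWgens [a [b [c [d [H ->]]]]].
move: H; rewrite /distinct4 => /andP [? /and5P [? ? ? ? ?]].
by apply: E_inWn => //; apply: neq_sym.
Qed.

Lemma sum2_pick (F : 'I_n -> 'I_n -> R) x y :
  \sum_i \sum_j (F i j * ((x == i) && (y == j))%:R) = F x y.
Proof.
rewrite (bigD1 x) //= [X in _ + X = _]big1 ?addr0.
  rewrite ?eqxx /= -[RHS](sum_pick (F x) y); apply: eq_bigr => j _.
  by rewrite mulrC eq_sym.
move=> i /negbTE hi; rewrite big1 // => j _.
by rewrite eq_sym hi /= mulr0.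
Qed.

Lemma sum2_pickC (F : 'I_n -> 'I_n -> R) x y :
  \sum_i \sum_j (F i j * ((x == j) && (y == i))%:R) = F y x.
Proof.
rewrite exchange_big /= -[RHS](sum2_pick (fun j i => F i j) x y).
by apply: eq_bigr => i _; apply: eq_bigr => j _; rewrite andbC.
Qed.

Section Spanning.
Variables o e f : 'I_n.
Hypotheses (hoe : o != e) (hof : o != f) (hef : e != f).

Lemma block_approx (Q : M) : inWn Q -> exists2 A, A \in V &
  forall x y, x != o -> x != e -> y != o -> y != e -> A x y = Q x y.
Proof.
case/inWnP => _ Q2 Q3.
pose c i j := if [&& i != o, i != e, j != o, j != e & i != j] then Q i j / 2 else 0.
exists (\sum_i \sum_j c i j *: E i j o e).
  apply: memv_suml => i _; apply: memv_suml => j _; rewrite /c.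
  case: ifP => [/and5P [io ie jo je ij]|_]; last by rewrite scale0r mem0v.
  by apply/memvZ/E_in_V; rewrite /distinct4 ij io ie jo je hoe.
move=> x y xo xe yo ye.
have Exy i j : E i j o e x y = ((x == i) && (y == j))%:R + ((x == j) && (y == i))%:R.
  by rewrite EE !SE; simpeq; rewrite ?andbF /=; ring.
rewrite summxE; under eq_bigr do rewrite summxE.
under eq_bigr do under eq_bigr do rewrite mxE Exy mulrDr.
under eq_bigr do rewrite big_split /=.
rewrite big_split /= sum2_pick sum2_pickC /c xo xe yo ye /=.
have [->|xy] := eqVneq x y; first by rewrite Q3 addr0.
by rewrite /= (Q2 x y); field.
Qed.

Lemma row_approx (N : M) : exists2 B, B \in V &
  (forall x y, x != o -> x != e -> y != o -> y != e -> B x y = 0) /\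
  (forall y, y != o -> y != e -> y != f -> B o y = N o y).
Proof.
pose d j := if [&& j != o, j != e & j != f] then N o j else 0.
have heo := neq_sym hoe; have hfo := neq_sym hof; have hfe := neq_sym hef.
exists (\sum_j d j *: E o j e f).
  apply: memv_suml => j _; rewrite /d.
  case: ifP => [/and3P [jo je jf]|_]; last by rewrite scale0r mem0v.
  by apply/memvZ/E_in_V; rewrite /distinct4; simpeq.
split=> [x y xo xe yo ye|y yo ye yf].
  by rewrite summxE big1 // => j _; rewrite mxE EE !SE; simpeq; rewrite ?andbF /=; ring.
have -> : N o y = d y by rewrite /d yo ye yf.
rewrite summxE -(sum_pick d y); apply: eq_bigr => j _.
by rewrite mxE EE !SE; simpeq; rewrite ?andbF /= (eq_sym y j); ring.
Qed.

(* Rigidity: a matrix of W_n vanishing away from the rows and columns o, e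
   and on row o outside {o,e,f} is zero, by the row-sum conditions. *)
Lemma inWn_rigid (N : M) : inWn N ->
  (forall x y, x != o -> x != e -> y != o -> y != e -> N x y = 0) ->
  (forall y, y != o -> y != e -> y != f -> N o y = 0) -> N = 0.
Proof.
move=> /inWnP [N1 N2 N3] Nblock Nrow.
have heo := neq_sym hoe; have hfo := neq_sym hof; have hfe := neq_sym hef.
have rowsum x : N x o + N x e + N x f +
    \sum_(j | (j != o) && (j != e) && (j != f)) N x j = 0.
  have hf : (f != o) && (f != e) by rewrite hfo hfe.
  by move: (N1 x); rewrite (bigD1 o) //= (bigD1 e) //= (bigD1 f) //= !addrA.
have rest0 x : (forall j, j != o -> j != e -> j != f -> N x j = 0) ->
    N x o + N x e + N x f = 0.
  by move=> Hx; move: (rowsum x); rewrite big1 ?addr0 // => j /andP [/andP []]; apply: Hx.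
have Nxe x : x != o -> x != e -> x != f -> N x e = 0.
  move=> xo xe xf; have := rest0 x (fun j jo je _ => Nblock x j xo xe jo je).
  by rewrite (N2 o x) Nrow // (Nblock x f) // !addr0 add0r.
have Ro := rest0 o Nrow.
have Re := rest0 e (fun j jo je jf => etrans (N2 j e) (Nxe j jo je jf)).
have Rf := rest0 f (fun j jo je _ => Nblock f j hfo hfe jo je).
have Noe : N o e = 0 by move: Ro Re Rf; rewrite !N3 (N2 o e) (N2 o f) (N2 e f); lra.
have Nof : N o f = 0 by move: Ro; rewrite N3 Noe; lra.
have Nef : N e f = 0 by move: Re; rewrite N3 (N2 o e) Noe; lra.
(* By symmetry of N it suffices to show that rows o and e vanish. *)
have rows_oe x y : x \in [:: o; e] -> N x y = 0.
  rewrite !inE => /orP [] /eqP ->.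
  - have [->|yo] := eqVneq y o; first exact: N3.
    have [->|ye] := eqVneq y e; first exact: Noe.
    by have [->|yf] := eqVneq y f; [exact: Nof | exact: Nrow].
  - have [->|yo] := eqVneq y o; first by rewrite N2.
    have [->|ye] := eqVneq y e; first exact: N3.
    by have [->|yf] := eqVneq y f; [exact: Nef | rewrite -N2 Nxe].
apply/matrixP => x y; rewrite mxE.
have [xoe|xo] := boolP (x \in [:: o; e]); first exact: rows_oe.
have [yoe|yo] := boolP (y \in [:: o; e]); first by rewrite -N2 rows_oe.
by move: xo yo; rewrite !inE !negb_or => /andP [? ?] /andP [? ?]; apply: Nblock.
Qed.

End Spanning.

Lemma inWn_V (Q : M) : (3 <= n)%N -> inWn Q -> Q \in V.
Proof.
move=> n3 HQ.
pose o := Ordinal (ltnW (ltnW n3)); pose e := Ordinal (ltnW n3); pose f := Ordinal n3.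
have hoe : o != e by []. have hof : o != f by []. have hef : e != f by [].
have [A AV Ablock] := block_approx hoe HQ.
have [B BV [Bblock Brow]] := row_approx hoe hof hef (Q - A).
suff : Q - A - B = 0 by move/eqP; rewrite subr_eq0 subr_eq => /eqP ->; apply: memvD.
apply: (inWn_rigid hoe hof hef); first by apply: inWnB; [apply: inWnB => //|]; apply: V_inWn.
  by move=> x y xo xe yo ye; rewrite !mxE Ablock // Bblock // !subrr.
by move=> y yo ye yf; rewrite !mxE Brow // !mxE subrr.
Qed.

Local Notation FT := (FT R n).
Local Notation tab := (@tab R n).
Local Notation polytab := (@polytab R n).

Definition phi (X : M) : FT := \sum_i \sum_j (X i j / 2) *: tab [set i; j].

Lemma phiE X B : phi X B = \sum_i \sum_j (X i j / 2 * (B == [set i; j])%:R).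
Proof.
rewrite sum_ffunE; apply: eq_bigr => i _; rewrite sum_ffunE; apply: eq_bigr => j _.
by rewrite !ffunE.
Qed.

Lemma phi_lin a X Y : phi (a *: X + Y) = a *: phi X + phi Y.
Proof.
apply/ffunP => B; rewrite !ffunE !phiE scaler_sumr -big_split; apply: eq_bigr => i _.
rewrite scaler_sumr -big_split; apply: eq_bigr => j _; rewrite !mxE.
by rewrite !mulrDl -!mulrA.
Qed.

Lemma phiB X Y : phi (X - Y) = phi X - phi Y.
Proof.
by rewrite [X - Y]addrC -scaleN1r phi_lin scaleN1r addrC.
Qed.

Lemma phi0 : phi 0 = 0.
Proof. by rewrite -(subrr (0 : M)) phiB subrr.
Qed.

Lemma phiS x y : phi (S x y) = tab [set x; y].
Proof.
apply/ffunP => B; rewrite phiE ffunE.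
have -> : (B == [set x; y])%:R = (B == [set x; y])%:R / 2 + (B == [set y; x])%:R / 2 :> R.
  by rewrite setUC; field.
rewrite -(sum2_pick (fun i j => (B == [set i; j])%:R / 2) x y).
rewrite -(sum2_pick (fun i j => (B == [set i; j])%:R / 2) y x) -big_split.
apply: eq_bigr => i _; rewrite -big_split; apply: eq_bigr => j _.
rewrite SE (eq_sym i x) (eq_sym j y) (eq_sym i y) (eq_sym j x) -[RHS]/(_ + _); ring.
Qed.

Lemma phi_E a b c d : phi (E a b c d) = polytab a b c d.
Proof.
have phiD X Y : phi (X + Y) = phi X + phi Y by have := phi_lin 1 X Y; rewrite !scale1r.
by rewrite /E phiD !phiB !phiS.
Qed.

Lemma imset_perm2 (s : 'S_n) i j : [set s i; s j] = s @: [set i; j].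
Proof. by rewrite imsetU1 imset_set1. Qed.

Lemma eq_imsetV (s : 'S_n) (B A : {set 'I_n}) : (B == s @: A) = ((s^-1)%g @: B == A).
Proof.
by apply/eqP/eqP => [->|<-]; rewrite -imset_comp ?(eq_imset _ (permK s))
  ?(eq_imset _ (permKV s)) imset_id.
Qed.

Lemma phi_equiv s X : phi (actL s X) = actT s (phi X).
Proof.
apply/ffunP => B; rewrite /actT ffunE !phiE.
rewrite (reindex_inj (@perm_inj _ s)) /=; apply: eq_bigr => i _.
rewrite (reindex_inj (@perm_inj _ s)) /=; apply: eq_bigr => j _.
by rewrite actLE !permK imset_perm2 eq_imsetV.
Qed.

Lemma pair_neq (u : 'I_n) (A B : {set 'I_n}) : u \in A -> u \notin B -> (A == B) = false.
Proof. by move=> uA uB; apply/negP => /eqP AB; move: uB; rewrite -AB uA. Qed.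

Lemma phi_eval Z i j : inWn Z -> i != j -> phi Z [set i; j] = Z i j.
Proof.
case/inWnP => _ Z2 _ ij; have ji := neq_sym ij.
have pair_out a b : a \notin [set i; j] -> ([set i; j] == [set a; b]) = false.
  by move=> ha; rewrite eq_sym (@pair_neq a) // !inE eqxx.
rewrite phiE (bigD1 i) //= [X in _ + X](bigD1 j) //=.
rewrite [X in _ + (_ + X)]big1 ?addr0; last first.
  move=> a /andP [ai aj]; rewrite big1 // => b _.
  by rewrite pair_out ?mulr0 // !inE negb_or ai aj.
rewrite [X in X + _](bigD1 j) //= [X in (_ + X) + _]big1 ?addr0; last first.
  move=> b bj; rewrite (@pair_neq j) ?mulr0 // !inE ?eqxx ?orbT //.
  by rewrite negb_or ji (neq_sym bj).
rewrite [X in _ + X](bigD1 i) //= [X in _ + (_ + X)]big1 ?addr0; last first.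
  move=> b bi; rewrite (@pair_neq i) ?mulr0 // !inE ?eqxx ?orbT //.
  by rewrite negb_or ij (neq_sym bi).
by rewrite [[set j; i]]setUC !eqxx /= (Z2 i j); field.
Qed.

Lemma mem_polytabs f : f \in polytabs R n ->
  exists a b c d, distinct4 a b c d /\ f = polytab a b c d.
Proof. by case/mapP => [[[[i j] k] l]]; rewrite mem_enum /= => H ->; exists i, j, k, l. Qed.

Lemma polytab_in_specht (a b c d : 'I_n) : distinct4 a b c d -> polytab a b c d \in specht R n.
Proof. by move=> H; apply/memv_span/mapP; exists (a, b, c, d); rewrite ?mem_enum. Qed.

Lemma V_submodule : (3 <= n)%N -> is_submodule V.
Proof.
move=> n3; split => [Q /V_inWn /and3P [] //| s Q /V_inWn HQ].
by apply: inWn_V => //; apply: inWn_actL.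
Qed.

Lemma V_iso : iso_specht V.
Proof.
exists phi; split=> [X Y _ _ a|X Y HX HY phiXY|g|s X _]; first exact: phi_lin.
- have HZ : inWn (X - Y) by apply: V_inWn; apply: memvB.
  apply/eqP; rewrite -subr_eq0; apply/eqP/matrixP => i j; rewrite [RHS]mxE.
  have [<-|ij] := eqVneq i j; first by case/inWnP: HZ.
  by rewrite -phi_eval // phiB phiXY subrr ffunE.
- split=> [|[X HX <-]].
  + move: g; apply: span_ind => [|a g h [X HX <-] [Y HY <-]|g].
    * by exists 0; rewrite ?mem0v ?phi0.
    * by exists (a *: X + Y); rewrite ?phi_lin // memvD ?memvZ.
    * case/mem_polytabs => a [b [c [d [H ->]]]].
      by exists (E a b c d); [apply: E_in_V | apply: phi_E].
  + move: X HX; apply: span_ind => [|a X Y HX HY|X].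
    * by rewrite phi0 mem0v.
    * by rewrite phi_lin memvD ?memvZ.
    * by case/memWgens => a [b [c [d [H ->]]]]; rewrite phi_E polytab_in_specht.
- exact: phi_equiv.
Qed.

Lemma actT_polytab (s : 'S_n) a b c d :
  actT s (polytab a b c d) = polytab (s a) (s b) (s c) (s d).
Proof. by apply/ffunP => B; rewrite !ffunE !imset_perm2 !eq_imsetV. Qed.

Lemma polytab_swap13 a b c d : polytab c b a d = (-1) *: polytab a b c d.
Proof. by rewrite scaleN1r; apply/ffunP => B; rewrite !ffunE; ring. Qed.

Lemma polytab_swap24 a b c d : polytab a d c b = (-1) *: polytab a b c d.
Proof. by rewrite scaleN1r; apply/ffunP => B; rewrite !ffunE; ring. Qed.

Lemma polytab_swap12_34 a b c d : polytab b a d c = 1 *: polytab a b c d.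
Proof.
apply/ffunP => B; rewrite !ffunE scale1r.
rewrite (setUC [set b] [set a]) (setUC [set d] [set a]) (setUC [set b] [set c]).
by rewrite (setUC [set d] [set c]); ring.
Qed.

Lemma polytab_neq0 a b c d : distinct4 a b c d -> polytab a b c d != 0.
Proof.
rewrite /distinct4 => /andP [hab /and5P [hac had hbc hbd hcd]].
apply/eqP => /ffunP /(_ [set a; b]); rewrite !ffunE eqxx.
rewrite (@pair_neq a) ?(@pair_neq b [set a; b] [set a; d]) ?(@pair_neq a [set a; b] [set c; d]);
  rewrite ?inE ?eqxx ?orbT //= ?negb_or ?(neq_sym hac) ?(neq_sym hbd) ?(neq_sym had) //.
- by move/eqP; rewrite !subr0 addr0 oner_eq0.
- by rewrite hac had.
- by rewrite (neq_sym hab) hbd.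
- by rewrite hac hab.
Qed.

Lemma eigen_entry (s : 'S_n) (eps : R) (X : M) x y :
  actL s X = eps *: X -> X x y = eps * X (s x) (s y).
Proof. by move=> HX; have := actLE s X (s x) (s y); rewrite HX !permK mxE => ->. Qed.

Lemma E_shape (a b c d : 'I_n) (X : M) : distinct4 a b c d ->
  actL (tperm a c) X = (-1) *: X -> actL (tperm b d) X = (-1) *: X ->
  actL (tperm a b * tperm c d) X = 1 *: X -> X = X a b *: E a b c d.
Proof.
move=> D /eigen_entry Eac /eigen_entry Ebd /eigen_entry Eabcd.
move: D; rewrite /distinct4 => /andP [hab /and5P [hac had hbc hbd hcd]].
have hba := neq_sym hab; have hca := neq_sym hac; have hda := neq_sym had.
have hcb := neq_sym hbc; have hdb := neq_sym hbd; have hdc := neq_sym hcd.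
(* Entries fixed by (a c), resp. (b d), vanish. *)
have Zac x y : x != a -> x != c -> y != a -> y != c -> X x y = 0.
  by move=> xa xc ya yc; have := Eac x y; rewrite !tpermE'; simpeq; lra.
have Zbd x y : x != b -> x != d -> y != b -> y != d -> X x y = 0.
  by move=> xb xd yb yd; have := Ebd x y; rewrite !tpermE'; simpeq; lra.
(* The eight remaining entries are +-X_ab. *)
have Xba : X b a = X a b by rewrite Eabcd !permM !tpermE'; simpeq; rewrite mul1r.
have Xcb : X c b = - X a b by rewrite Eac !tpermE'; simpeq; rewrite mulN1r.
have Xad : X a d = - X a b by rewrite Ebd !tpermE'; simpeq; rewrite mulN1r.
have Xbc : X b c = - X a b by rewrite Eac !tpermE'; simpeq; rewrite Xba mulN1r.
have Xda : X d a = - X a b by rewrite Ebd !tpermE'; simpeq; rewrite Xba mulN1r.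
have Xcd : X c d = X a b by rewrite Eac !tpermE'; simpeq; rewrite Xad mulN1r opprK.
have Xdc : X d c = X a b by rewrite Eac !tpermE'; simpeq; rewrite Xda mulN1r opprK.
apply/matrixP => x y; rewrite mxE EE !SE.
have [->|xa] := eqVneq x a.
  have [->|yb] := eqVneq y b; first by simpeq; ring.
  by have [->|yd] := eqVneq y d; [rewrite Xad | rewrite Zbd]; simpeq; ring.
have [->|xc] := eqVneq x c.
  have [->|yb] := eqVneq y b; first by rewrite Xcb; simpeq; ring.
  by have [->|yd] := eqVneq y d; [rewrite Xcd | rewrite Zbd]; simpeq; ring.
have [->|xb] := eqVneq x b.
  have [->|ya] := eqVneq y a; first by rewrite Xba; simpeq; ring.
  by have [->|yc] := eqVneq y c; [rewrite Xbc | rewrite Zac]; simpeq; ring.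
have [->|xd] := eqVneq x d.
  have [->|ya] := eqVneq y a; first by rewrite Xda; simpeq; ring.
  by have [->|yc] := eqVneq y c; [rewrite Xdc | rewrite Zac]; simpeq; ring.
have [->|ya] := eqVneq y a; first by rewrite Zbd //; simpeq; ring.
by have [->|yc] := eqVneq y c; [rewrite Zbd | rewrite Zac]; simpeq; ring.
Qed.

Section Uniqueness.
Variables (U : {vspace M}) (psi : M -> FT).
Hypothesis U_stable : forall s Y, Y \in U -> actL s Y \in U.
Hypothesis psi_lin : {in U &, forall (X Y : M) (a : R), psi (a *: X + Y) = a *: psi X + psi Y}.
Hypothesis psi_inj : {in U &, injective psi}.
Hypothesis psi_equiv : forall s Y, Y \in U -> psi (actL s Y) = actT s (psi Y).

Lemma psi0 : psi 0 = 0.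
Proof.
have := psi_lin (mem0v U) (mem0v U) 1; rewrite !scale1r addr0 => H.
by apply: (addrI (psi 0)); rewrite addr0 -H.
Qed.

Lemma psiZ eps X : X \in U -> psi (eps *: X) = eps *: psi X.
Proof. by move=> HX; have := psi_lin HX (mem0v U) eps; rewrite !addr0 psi0 addr0. Qed.

Lemma psi_eigen (s : 'S_n) eps X : X \in U ->
  psi (actL s X) = eps *: psi X -> actL s X = eps *: X.
Proof. by move=> HX H; apply: psi_inj; rewrite ?memvZ ?psiZ // U_stable. Qed.

Lemma psi_polytab (a b c d : 'I_n) X : distinct4 a b c d -> X \in U ->
  psi X = polytab a b c d -> X = X a b *: E a b c d.
Proof.
move=> D HX PX; apply: E_shape => //; apply: psi_eigen;
  rewrite // psi_equiv // PX actT_polytab ?permM !tpermE';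
  move: D; rewrite /distinct4 => /andP [? /and5P [? ? ? ? ?]]; simpeq.
- exact: polytab_swap13.
- exact: polytab_swap24.
- exact: polytab_swap12_34.
Qed.

End Uniqueness.

Lemma V_unique (U : {vspace M}) : is_submodule U -> iso_specht U -> U = V.
Proof.
move=> [_ Uact] [psi [lin inj surj eqv]].
have preimage a b c d : distinct4 a b c d ->
    exists2 X, X \in U & (psi X = polytab a b c d /\ X = X a b *: E a b c d).
  move=> D; have [X HX PX] := (surj _).1 (polytab_in_specht D).
  by exists X => //; split => //; apply: (psi_polytab Uact lin inj eqv D HX PX).
have image_UV g : g \in specht R n -> exists2 Y, Y \in U & (Y \in V) /\ psi Y = g.
  move: g; apply: span_ind => [|a g h [Y1 U1 [V1 <-]] [Y2 U2 [V2 <-]]|g].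
  - by exists 0; rewrite ?mem0v ?(psi0 lin).
  - exists (a *: Y1 + Y2); first by rewrite memvD ?memvZ.
    by split; [rewrite memvD ?memvZ | apply: lin].
  - case/mem_polytabs => a [b [c [d [D ->]]]].
    have [Y HY [PY EY]] := preimage a b c d D.
    by exists Y => //; split => //; rewrite EY memvZ ?E_in_V.
apply/vspaceP => X; apply/idP/idP => HX.
- have [Y HY [VY PY]] := image_UV (psi X) ((surj _).2 (ex_intro2 _ _ X HX erefl)).
  by rewrite (inj _ _ HX HY) ?PY.
- move: X HX; apply/subvP/span_subvP => g /memWgens [a [b [c [d [D ->]]]]].
  have [Y HY [PY EY]] := preimage a b c d D.
  have Yab : Y a b != 0.
    by apply: contraTneq (polytab_neq0 D) => Y0; rewrite negbK -PY EY Y0 scale0r (psi0 lin).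
  by rewrite -[E _ _ _ _](scalerK Yab) -EY memvZ.
Qed.

End Matrices.

Theorem mainTheorem12 (R : realType) (n : nat) : (4 <= n)%N ->
  exists W : {vspace 'M[R]_n},
    [/\ (forall Q, Q \in W = inWn Q),
        is_submodule W,
        iso_specht W,
        (forall U : {vspace 'M[R]_n}, is_submodule U -> iso_specht U -> U = W)
      & W = <<Wgens R n>>%VS].
Proof.
move=> n4; have n3 : (3 <= n)%N by apply: ltnW.
exists <<Wgens R n>>%VS; split => //.
- by move=> Q; apply/idP/idP; [apply: V_inWn | apply: inWn_V].
- exact: V_submodule.
- exact: V_iso.
- by move=> U; apply: V_unique.
Qed.
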